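(* Let $\mathcal{W}$ be a finite set and $(X_t)_{t\ge1}$ a time-homogeneous first-order Markov chain on $\mathcal{W}$ with initial distribution $p_{x_1}$ and transition probabilities $q_x(x_{t+1}\mid x_t)$. For any history-dependent release policy $\boldsymbol q\in\mathcal{Q}_H$ and any $n\ge1$, $$I^{\boldsymbol q}(X^n;Y^n)\ \ge\ \sum_{t=1}^n I^{\boldsymbol q}(X_t,X_{t-1};Y_t\mid Y^{t-1}),$$ with equality if and only if $\boldsymbol q\in\mathcal{Q}_S$.
   Context: Notation: $X^t=(X_1,\dots,X_t)$, $Y^{t-1}=(Y_1,\dots,Y_{t-1})$, $Y^0$ empty; at $t=1$ terms involving $X_0$ are absent. A history-dependent release policy is a sequence $\boldsymbol q=\{q_t(y_t\mid x^t,y^{t-1})\}_{t\ge1}$ of conditional probability distributions on $\mathcal{W}$; $\mathcal{Q}_H$ is the set of all such policies. The released locations $Y_t\in\mathcal W$ and true locations have joint law $$P^{\boldsymbol q}(X^n=x^n,Y^n=y^n)=p_{x_1}(x_1)q_1(y_1\mid x_1)\prod_{t=2}^n q_x(x_t\mid x_{t-1})\,q_t(y_t\mid x^t,y^{t-1}),$$ and $I^{\boldsymbol q}$ denotes mutual information under this law. $\mathcal{Q}_S\subseteq\mathcal{Q}_H$ is the set of policies of the form $q_t(y_t\mid x_t,x_{t-1},y^{t-1})$, depending on the true trajectory only through $(x_t,x_{t-1})$. *)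

From HB Require Import structures.
From mathcomp Require Import all_boot all_order all_algebra.
From mathcomp Require Import reals exp.
Set Implicit Arguments. Unset Strict Implicit. Unset Printing Implicit Defensive.
Import Order.TTheory GRing.Theory Num.Theory.
Local Open Scope ring_scope.

Section InfoDefs.
Variable R : realType.

Definition prob (Om : finType) (P : Om -> R) (E : pred Om) : R :=
  \sum_(w | E w) P w.

(* Conditional mutual information I(A;B|C) (natural log) of random variables
   A, B, C defined on the finite space (Om, P):
   I(A;B|C) = sum_w P(w) log [ P(A,B,C) P(C) / (P(A,C) P(B,C)) ]
   where each probability is that of the event "same value as at w".
   (This equals sum_{a,b,c} p(a,b,c) log (p(a,b,c)p(c)/(p(a,c)p(b,c))).) *)
Definition cmi (Om : finType) (P : Om -> R)
    (TA TB TC : eqType) (A : Om -> TA) (B : Om -> TB) (C : Om -> TC) : R :=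
  \sum_(w : Om) P w *
    ln (prob P [pred v | [&& A v == A w, B v == B w & C v == C w]]
        * prob P [pred v | C v == C w]
        / (prob P [pred v | (A v == A w) && (C v == C w)]
           * prob P [pred v | (B v == B w) && (C v == C w)])).

Definition mi (Om : finType) (P : Om -> R) (TA TB : eqType)
    (A : Om -> TA) (B : Om -> TB) : R :=
  cmi P A B (fun _ => tt).

(* Time is 0-based below: index t (t = 0,...,n-1) stands for the paper's t+1.
   A release policy: q t xs ys y = q_{t+1}(y | x^{t+1} = xs, y^{t} = ys),
   meaningful for size xs = t.+1, size ys = t. *)
Definition policy (W : finType) := nat -> seq W -> seq W -> W -> R.

Definition is_policyH (W : finType) (q : policy W) : Prop :=
  forall t (xs ys : seq W), size xs = t.+1 -> size ys = t ->
    (forall y, 0 <= q t xs ys y) /\ \sum_(y : W) q t xs ys y = 1.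

(* q is in Q_S: a policy in Q_H whose kernel depends on the true trajectory
   only through the last two locations (x_t, x_{t-1}) (only x_t at time 1).
   [drop t.-1 xs] is the list of these last (at most two) locations. *)
Definition is_policyS (W : finType) (q : policy W) : Prop :=
  is_policyH q /\
  forall t (xs xs' ys : seq W), size xs = t.+1 -> size xs' = t.+1 ->
    drop t.-1 xs = drop t.-1 xs' -> q t xs ys =1 q t xs' ys.

Definition outcome (W : finType) (n : nat) := (n.-tuple W * n.-tuple W)%type.

(* Joint law P^q(X^n = xs, Y^n = ys) for a Markov chain with initial law p1
   and transition kernel K (K x x' = q_x(x' | x)). *)
Definition joint (W : finType) (n : nat) (p1 : W -> R) (K : W -> W -> R)
    (q : policy W) (w : outcome W n) : R :=
  let xs := w.1 in let ys := w.2 in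
  \prod_(t < n)
    ((if t == 0 :> nat then p1 (tnth xs t)
      else K (nth (tnth xs t) xs t.-1) (tnth xs t))
     * q t (take t.+1 xs) (take t ys) (tnth ys t)).

(* X_t together with X_{t-1} (None at the first time step, where X_0 is absent). *)
Definition Xpair (W : finType) (n : nat) (t : 'I_n) (w : outcome W n)
  : (W * option W)%type :=
  (tnth w.1 t, if t == 0 :> nat then None else Some (nth (tnth w.1 t) w.1 t.-1)).

Definition Ycur (W : finType) (n : nat) (t : 'I_n) (w : outcome W n) : W :=
  tnth w.2 t.
Definition Ypast (W : finType) (n : nat) (t : 'I_n) (w : outcome W n) : seq W :=
  take t w.2.

End InfoDefs.

From HB Require Import structures.
From mathcomp Require Import all_boot all_order all_algebra.
From mathcomp Require Import reals exp.
From mathcomp.algebra_tactics Require Import lra.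
Set Implicit Arguments. Unset Strict Implicit. Unset Printing Implicit Defensive.
Import Order.TTheory GRing.Theory Num.Theory.
Local Open Scope ring_scope.

(* The joint law is the Markov law of X^n times the product of the release
   kernels q_t(y_t | x^t, y^{t-1}).  Let r_t be the conditional law of Y_t given
   (X_t, X_{t-1}, Y^{t-1}); it defines a policy in Q_S.  Expanding the logarithms and
   telescoping P(Y^t = y^t) gives
     I(X^n; Y^n) - sum_t I(X_t, X_{t-1}; Y_t | Y^{t-1}) = sum_t E[ln q_t - ln r_t],
   and each summand is a relative entropy: it is nonnegative since ln z <= z - 1, and it
   vanishes iff q_t = r_t on the support.  Conversely, if q agrees on the support with a
   policy of Q_S, conditioning on (X_t, X_{t-1}, Y^{t-1}) shows r_t = q_t there. *)

Section ChainProduct.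
Variables (R : comPzSemiRingType) (T : finType).

Definition chain_prod n (f : nat -> seq T -> T -> R) (z : n.-tuple T) : R :=
  \prod_(i < n) f i (take i z) (tnth z i).

Definition stochastic n (f : nat -> seq T -> T -> R) : Prop :=
  forall i s, (i < n)%N -> size s = i -> \sum_a f i s a = 1.

Lemma sum_tuple0 (G : 0.-tuple T -> R) : \sum_(z : 0.-tuple T) G z = G [tuple].
Proof. by rewrite (big_pred1 [tuple]) // => z; apply/esym/eqP; rewrite [z]tuple0. Qed.

Lemma sum_tupleS n (G : n.+1.-tuple T -> R) :
  \sum_(z : n.+1.-tuple T) G z = \sum_a \sum_(z : n.-tuple T) G [tuple of a :: z].
Proof.
rewrite pair_big /= (reindex (fun p : T * n.-tuple T => [tuple of p.1 :: p.2])) //=.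
exists (fun z : n.+1.-tuple T => (thead z, behead_tuple z)) => [[a z] _|z _] /=.
  by congr pair; apply: val_inj.
by rewrite [RHS]tuple_eta.
Qed.

Lemma chain_prod_cons n f a (z : n.-tuple T) :
  chain_prod f [tuple of a :: z] = f 0%N [::] a * chain_prod (fun i s => f i.+1 (a :: s)) z.
Proof.
rewrite /chain_prod big_ord_recl tnth0; congr (_ * _).
by apply: eq_bigr => i _; rewrite tnthS.
Qed.

Lemma stochastic_cons n f a : stochastic n.+1 f -> stochastic n (fun i s => f i.+1 (a :: s)).
Proof. by move=> f_stoch i s lt_in size_s; apply: f_stoch; rewrite /= ?size_s. Qed.

Lemma sum_chain_prod n f : stochastic n f -> \sum_(z : n.-tuple T) chain_prod f z = 1.
Proof.
elim: n f => [|n IH] f f_stoch; first by rewrite sum_tuple0 /chain_prod big_ord0.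
rewrite sum_tupleS -(f_stoch 0%N [::]) //; apply: eq_bigr => a _.
under eq_bigr do rewrite chain_prod_cons.
by rewrite -big_distrr /= IH ?mulr1 //; apply: stochastic_cons.
Qed.

Lemma chain_prod_tower n f k (h : seq T -> T -> R) x0 :
  stochastic n f -> (k < n)%N ->
  \sum_(z : n.-tuple T) chain_prod f z * h (take k z) (nth x0 z k) =
  \sum_(z : n.-tuple T) chain_prod f z * \sum_a f k (take k z) a * h (take k z) a.
Proof.
elim: n f k h => // n IH f [|k] h f_stoch lt_kn; rewrite !sum_tupleS.
  have sum_tail a c :
      \sum_(z : n.-tuple T) f 0%N [::] a * chain_prod (fun i s => f i.+1 (a :: s)) z * c =
      f 0%N [::] a * c.
    by rewrite -big_distrl -big_distrr /= sum_chain_prod ?mulr1 //; apply: stochastic_cons.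
  under eq_bigr do under eq_bigr do rewrite chain_prod_cons.
  under [RHS]eq_bigr do under eq_bigr do rewrite chain_prod_cons.
  rewrite /=; under eq_bigr do rewrite sum_tail.
  by under [RHS]eq_bigr do rewrite sum_tail; rewrite -big_distrl /= (f_stoch 0%N [::]) ?mul1r.
apply: eq_bigr => a _.
under eq_bigr do rewrite chain_prod_cons -mulrA.
under [RHS]eq_bigr do rewrite chain_prod_cons -mulrA.
rewrite -!big_distrr /=; congr (_ * _).
exact: (IH _ _ (fun s => h (a :: s)) (stochastic_cons a f_stoch)).
Qed.

End ChainProduct.

Section Logarithm.
Variable R : realType.

Lemma ln_le_subr1 (x : R) : 0 < x -> ln x <= x - 1.
Proof. by move=> x_gt0; have := expR_ge1Dx (ln x); rewrite lnK ?posrE //; lra. Qed.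

Lemma ln_lt_subr1 (x : R) : 0 < x -> x != 1 -> ln x < x - 1.
Proof.
move=> x_gt0 x_neq1; have := @expR_gt1Dx R (ln x).
by rewrite ln_eq0 // x_neq1 lnK ?posrE // => /(_ isT); lra.
Qed.

Lemma ln_prod (I : finType) (F : I -> R) :
  (forall i, 0 < F i) -> ln (\prod_i F i) = \sum_i ln (F i).
Proof.
move=> F_gt0; suff [] : 0 < \prod_i F i /\ ln (\prod_i F i) = \sum_i ln (F i) by [].
apply: (big_ind2 (fun x y => 0 < x /\ ln x = y)); first by rewrite ln1.
  by move=> a1 a2 b1 b2 [a1_gt0 <-] [b1_gt0 <-]; rewrite lnM ?posrE ?mulr_gt0.
by move=> i _; split.
Qed.

Lemma ln_ratio_ge (b c : R) : 0 < b -> 0 < c -> 1 - c / b <= ln b - ln c.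
Proof.
move=> b_gt0 c_gt0; have := ln_le_subr1 (divr_gt0 c_gt0 b_gt0).
by rewrite ln_div ?posrE //; lra.
Qed.

Lemma ln_ratio_eq (b c : R) : 0 < b -> 0 < c -> ln b - ln c = 1 - c / b -> c = b.
Proof.
move=> b_gt0 c_gt0 eq_ln; have [//|c_neq_b] := eqVneq c b.
have cb_neq1 : c / b != 1.
  by apply: contraNneq c_neq_b => cb1; rewrite -[c](divfK (lt0r_neq0 b_gt0)) cb1 mul1r.
have := ln_lt_subr1 (divr_gt0 c_gt0 b_gt0) cb_neq1.
by rewrite ln_div ?posrE //; lra.
Qed.

End Logarithm.

Section Prob.
Variables (R : realType) (Om : finType) (P : Om -> R).

Lemma prob_indicator (E : pred Om) : prob P E = \sum_v P v * (E v)%:R.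
Proof.
by rewrite /prob big_mkcond; apply: eq_bigr => v _; case: (E v); rewrite ?mulr1 ?mulr0.
Qed.

Lemma prob_ge_point (E : pred Om) w : (forall v, 0 <= P v) -> E w -> P w <= prob P E.
Proof. by move=> P_ge0 Ew; rewrite /prob (bigD1 w) //= lerDl sumr_ge0. Qed.

End Prob.

Lemma eqfun_of_support (R : numDomainType) (I : finType) (f g : I -> R) :
  (forall i, 0 <= g i) -> \sum_i f i = \sum_i g i ->
  (forall i, f i != 0 -> f i = g i) -> f =1 g.
Proof.
move=> g_ge0 eq_sum eq_supp.
have dfg_ge0 i : true -> 0 <= g i - f i.
  by move=> _; have [->|/eq_supp ->] := eqVneq (f i) 0; rewrite ?subr0 ?subrr.
move=> i; apply/eqP; rewrite eq_sym -subr_eq0; apply/eqP.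
by apply: (psumr_eq0P dfg_ge0) => //; rewrite sumrB eq_sum subrr.
Qed.

Lemma last_take (T : Type) (x : T) s i :
  (0 < i <= size s)%N -> last x (take i s) = nth x s i.-1.
Proof. by case: i => // i /= le_is; rewrite -nth_last size_takel //= nth_take. Qed.

Section ReleaseModel.
Variables (R : realType) (W : finType) (p1 : W -> R) (K : W -> W -> R) (n : nat).
Hypotheses (p1_ge0 : forall x, 0 <= p1 x) (sum_p1 : \sum_x p1 x = 1).
Hypotheses (K_ge0 : forall x x', 0 <= K x x') (sum_K : forall x, \sum_x' K x x' = 1).

Definition markov_kernel : nat -> seq W -> W -> R :=
  fun i s a => if i == 0%N then p1 a else K (last a s) a.

Definition policy_kernel (q : policy R W) (xs : seq W) : nat -> seq W -> W -> R :=
  fun i => q i (take i.+1 xs).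

Lemma stochastic_markov : stochastic n markov_kernel.
Proof.
move=> [|i] s _ size_s; first exact: sum_p1.
by case: s size_s => // a s _; exact: sum_K.
Qed.

Lemma stochastic_policy q (xs : n.-tuple W) :
  is_policyH q -> stochastic n (policy_kernel q xs).
Proof.
move=> q_policy i s lt_in size_s; apply: (q_policy _ _ _ _ size_s).2.
by rewrite size_takel ?size_tuple.
Qed.

Lemma joint_factor q (w : outcome W n) :
  joint p1 K q w = chain_prod markov_kernel w.1 * chain_prod (policy_kernel q w.1) w.2.
Proof.
rewrite /joint /chain_prod -big_split; apply: eq_bigr => i _ /=; congr (_ * _).
rewrite /markov_kernel; case: eqP => // /eqP i_neq0.
by rewrite last_take // lt0n i_neq0 size_tuple ltnW.
Qed.

Lemma sum_outcome (G : outcome W n -> R) :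
  \sum_(w : outcome W n) G w = \sum_(xs : n.-tuple W) \sum_(ys : n.-tuple W) G (xs, ys).
Proof. by rewrite pair_bigA; apply: eq_bigr => -[]. Qed.

Definition Xhist (t : 'I_n) (w : outcome W n) : seq W := take t.+1 w.1.

Lemma size_Xhist (t : 'I_n) (w : outcome W n) : size (Xhist t w) = t.+1.
Proof. by rewrite size_takel // size_tuple. Qed.

Lemma size_Ypast (t : 'I_n) (w : outcome W n) : size (Ypast t w) = t.
Proof. by rewrite size_takel // size_tuple ltnW. Qed.

Definition step_prob (r : policy R W) (t : 'I_n) (w : outcome W n) : R :=
  r t (Xhist t w) (Ypast t w) (Ycur t w).

Lemma policy_distr_at (r : policy R W) (t : 'I_n) (w : outcome W n) : is_policyH r ->
  (forall y, 0 <= r t (Xhist t w) (Ypast t w) y) /\ \sum_y r t (Xhist t w) (Ypast t w) y = 1.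
Proof. by move=> r_policy; apply: r_policy; [apply: size_Xhist | apply: size_Ypast]. Qed.

Definition key_seq (k : W * option W) : seq W :=
  if k.2 is Some b then [:: b; k.1] else [:: k.1].

Definition key_of_seq (s : seq W) : option (W * option W) :=
  match s with [:: a] => Some (a, None) | [:: b; a] => Some (a, Some b) | _ => None end.

Lemma key_seqK : pcancel key_seq key_of_seq.
Proof. by case=> a []. Qed.

Lemma drop_Xhist (t : 'I_n) (w : outcome W n) : drop t.-1 (Xhist t w) = key_seq (Xpair t w).
Proof.
rewrite /Xhist /Xpair (tnth_nth (tnth w.1 t)); move: (tnth w.1 t) => x.
case: t => -[|t] lt_tn /=; first by rewrite drop0 (take_nth x) ?size_tuple // take0.
have lt_t_n : (t < n)%N by apply: ltnW.
rewrite [nth (nth _ _ _) _ _](set_nth_default x) ?size_tuple //.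
rewrite -addn2 addnC -take_drop.
by rewrite (drop_nth x) ?size_tuple // (drop_nth x) ?size_tuple //= take0.
Qed.

Section Policy.
Variable q : policy R W.
Hypothesis q_policy : is_policyH q.
Local Notation P := (@joint R W n p1 K q).

Lemma joint_ge0 w : 0 <= P w.
Proof.
rewrite joint_factor; apply: mulr_ge0; apply: prodr_ge0 => i _.
  by rewrite /markov_kernel; case: eqP.
by have [->] := policy_distr_at i w q_policy.
Qed.

Lemma sum_joint_fst (xs : n.-tuple W) : \sum_ys P (xs, ys) = chain_prod markov_kernel xs.
Proof.
under eq_bigr do rewrite joint_factor /=.
by rewrite -big_distrr /= sum_chain_prod ?mulr1 //; apply: stochastic_policy.
Qed.

Lemma sum_joint : \sum_w P w = 1.
Proof.
rewrite sum_outcome -(sum_chain_prod stochastic_markov).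
by apply: eq_bigr => xs _; rewrite sum_joint_fst.
Qed.

Lemma prob_fst (xs : n.-tuple W) : prob P [pred v | v.1 == xs] = chain_prod markov_kernel xs.
Proof.
rewrite /prob (eq_bigr (fun v => P (v.1, v.2))) => [|[] //].
rewrite (eq_bigl (fun v => pred1 xs v.1 && predT v.2)) => [|v]; last by rewrite andbT.
by rewrite -(pair_big (pred1 xs) predT (fun a b => P (a, b))) big_pred1_eq sum_joint_fst.
Qed.

Lemma joint_le0 w : P w <= 0 -> P w = 0.
Proof. by move=> Pw_le0; apply/le_anti; rewrite Pw_le0 joint_ge0. Qed.

Lemma prob_ge0 (E : pred (outcome W n)) : 0 <= prob P E.
Proof. by apply: sumr_ge0 => v _; apply: joint_ge0. Qed.

Lemma prob_gt0 (E : pred (outcome W n)) w : 0 < P w -> E w -> 0 < prob P E.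
Proof. by move=> Pw Ew; apply: lt_le_trans Pw (prob_ge_point joint_ge0 Ew). Qed.

Lemma joint_step_cond (t : 'I_n) (G : seq W -> seq W -> W -> R) :
  \sum_w P w * G (Xhist t w) (Ypast t w) (Ycur t w) =
  \sum_w P w * \sum_y q t (Xhist t w) (Ypast t w) y * G (Xhist t w) (Ypast t w) y.
Proof.
rewrite !sum_outcome; apply: eq_bigr => xs _.
under eq_bigr do rewrite joint_factor /= -mulrA.
under [RHS]eq_bigr do rewrite joint_factor /= -mulrA.
rewrite -!big_distrr /=; congr (_ * _).
under eq_bigr => ys _ do rewrite /Ycur /= (tnth_nth (tnth xs t)).
exact: chain_prod_tower (fun s => G (take t.+1 xs) s) _
  (stochastic_policy xs q_policy) (ltn_ord t).
Qed.

Lemma prob_Ycur_event (t : 'I_n) (E : seq W -> seq W -> bool) y :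
  prob P [pred v | E (Xhist t v) (Ypast t v) && (Ycur t v == y)] =
  \sum_v P v * (E (Xhist t v) (Ypast t v))%:R * q t (Xhist t v) (Ypast t v) y.
Proof.
rewrite prob_indicator (joint_step_cond t (fun xh yh y' => (E xh yh && (y' == y))%:R)).
apply: eq_bigr => v _; rewrite -mulrA; congr (_ * _).
case: (E _ _) => /=; last by rewrite mul0r big1 // => y' _; rewrite mulr0.
by rewrite mul1r (bigD1 y) //= eqxx mulr1 big1 ?addr0 // => y' /negPf ->; rewrite mulr0.
Qed.

Lemma joint_support_step (t : 'I_n) w y :
  0 < P w -> 0 < q t (Xhist t w) (Ypast t w) y ->
  exists v, [/\ 0 < P v, Xhist t v = Xhist t w, Ypast t v = Ypast t w & Ycur t v = y].
Proof.
move=> Pw qy; pose E xh yh := (xh == Xhist t w) && (yh == Ypast t w).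
have : prob P [pred v | E (Xhist t v) (Ypast t v) && (Ycur t v == y)] != 0.
  rewrite prob_Ycur_event (bigD1 w) //= /E !eqxx mulr1 gt_eqF // ltr_wpDr ?mulr_gt0 //.
  apply: sumr_ge0 => v _; have [q_ge0 _] := policy_distr_at t v q_policy.
  by rewrite !mulr_ge0 ?joint_ge0 ?ler0n.
move=> /eqP /(psumr_neq0P (fun v _ => joint_ge0 v)) [v].
by case/andP => /andP[/andP[/eqP ? /eqP ?] /eqP ?] ?; exists v.
Qed.

Definition probXYt (t : 'I_n) k ys y :=
  prob P [pred v | [&& Xpair t v == k, Ycur t v == y & Ypast t v == ys]].
Definition probXt (t : 'I_n) k ys := prob P [pred v | (Xpair t v == k) && (Ypast t v == ys)].
Definition probYpast (k : nat) (w : outcome W n) :=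
  prob P [pred v : outcome W n | take k v.2 == take k w.2].

Definition cond_kernel (t : 'I_n) k ys y : R :=
  if 0 < probXt t k ys then probXYt t k ys y / probXt t k ys else p1 y.

(* The conditional law of Y_t given (X_t, X_{t-1}, Y^{t-1}); off the support, and at
   times t >= n, [p1] merely serves as some distribution on W. *)
Definition reduced_policy : policy R W := fun t xs ys y =>
  if (insub t : option 'I_n) is Some t' then
    if key_of_seq (drop t.-1 xs) is Some k then cond_kernel t' k ys y else p1 y
  else p1 y.

Lemma sum_probXYt t k ys : \sum_y probXYt t k ys y = probXt t k ys.
Proof.
rewrite /probXt prob_indicator; under eq_bigr do rewrite /probXYt prob_indicator.
rewrite exchange_big /=; apply: eq_bigr => v _; rewrite -big_distrr /=; congr (_ * _).
rewrite (bigD1 (Ycur t v)) //= eqxx big1 ?addr0 ?andbT // => y.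
by rewrite eq_sym => /negPf ->; rewrite andbF.
Qed.

Lemma cond_kernel_distr t k ys :
  (forall y, 0 <= cond_kernel t k ys y) /\ \sum_y cond_kernel t k ys y = 1.
Proof.
rewrite /cond_kernel; have [C_gt0|_] := boolP (0 < probXt t k ys).
  2: exact: conj p1_ge0 sum_p1.
split=> [y|]; first by rewrite divr_ge0 ?prob_ge0 ?ltW.
by rewrite -big_distrl /= sum_probXYt divff ?gt_eqF.
Qed.

Lemma reduced_policyS : is_policyS reduced_policy.
Proof.
split=> [t xs ys _ _|t xs xs' ys _ _ eq_drop y]; last by rewrite /reduced_policy eq_drop.
rewrite /reduced_policy; case: insub => [t'|]; last exact: conj p1_ge0 sum_p1.
by case: key_of_seq => [k|]; [exact: cond_kernel_distr | exact: conj p1_ge0 sum_p1].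
Qed.

Lemma reduced_policy_at (t : 'I_n) (w : outcome W n) :
  reduced_policy t (Xhist t w) (Ypast t w) =1 cond_kernel t (Xpair t w) (Ypast t w).
Proof. by move=> y; rewrite /reduced_policy valK drop_Xhist key_seqK. Qed.

Lemma step_reduced (t : 'I_n) (w : outcome W n) : 0 < P w ->
  step_prob reduced_policy t w =
  probXYt t (Xpair t w) (Ypast t w) (Ycur t w) / probXt t (Xpair t w) (Ypast t w).
Proof.
move=> Pw; rewrite /step_prob reduced_policy_at /cond_kernel ifT //.
by apply: (prob_gt0 Pw); rewrite /= !eqxx.
Qed.

Lemma probYpast0 w : probYpast 0 w = 1.
Proof. by rewrite -sum_joint; apply: eq_bigl => v; rewrite /= !take0. Qed.

Lemma mi_jointE : mi P (fun w : outcome W n => w.1) (fun w : outcome W n => w.2) =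
  \sum_w P w * ln (P w / (prob P [pred v | v.1 == w.1] * probYpast n w)).
Proof.
apply: eq_bigr => w _; congr (_ * ln (_ / (_ * _))).
- rewrite [X in _ * X](_ : _ = 1) ?mulr1; last by rewrite -sum_joint; apply: eq_bigl.
  by rewrite /prob (big_pred1 w) // => -[a b]; case: w => c d; rewrite /= andbT xpair_eqE.
- by apply: eq_bigl => v; rewrite /= andbT.
- by apply: eq_bigl => v; rewrite /= andbT !take_oversize ?size_tuple.
Qed.

Lemma cmi_XpairE (t : 'I_n) : cmi P (Xpair t) (Ycur t) (Ypast t) =
  \sum_w P w * ln (probXYt t (Xpair t w) (Ypast t w) (Ycur t w) * probYpast t w /
                   (probXt t (Xpair t w) (Ypast t w) * probYpast t.+1 w)).
Proof.
apply: eq_bigr => w _; congr (_ * ln (_ / (_ * _))).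
apply: eq_bigl => v; rewrite /= /Ycur /Ypast.
by rewrite !(take_nth (tnth w.2 t)) ?size_tuple // eqseq_rcons andbC -!tnth_nth.
Qed.

Lemma step_gt0 (t : 'I_n) w : 0 < P w -> 0 < step_prob q t w.
Proof.
move=> Pw; have [q_ge0 _] := policy_distr_at t w q_policy.
rewrite lt_def q_ge0 andbT; move: Pw; rewrite lt_def joint_factor => /andP[].
by rewrite mulf_eq0 negb_or => /andP[_ /prodf_neq0 /(_ t isT)].
Qed.

Lemma ln_mi_point w : 0 < P w ->
  ln (P w / (prob P [pred v | v.1 == w.1] * probYpast n w)) =
  \sum_t ln (step_prob q t w) - ln (probYpast n w).
Proof.
move=> Pw; have X_gt0 : 0 < prob P [pred v | v.1 == w.1] by apply: (prob_gt0 Pw) => /=.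
have Y_gt0 : 0 < probYpast n w by apply: (prob_gt0 Pw) => /=.
have steps_gt0 : 0 < \prod_t step_prob q t w by apply: prodr_gt0 => t _; apply: step_gt0.
have -> : P w = prob P [pred v | v.1 == w.1] * \prod_t step_prob q t w.
  by rewrite prob_fst joint_factor.
rewrite ln_div ?lnM ?posrE ?mulr_gt0 // ln_prod => [|t]; last exact: step_gt0.
lra.
Qed.

Lemma ln_cmi_point (t : 'I_n) w : 0 < P w ->
  ln (probXYt t (Xpair t w) (Ypast t w) (Ycur t w) * probYpast t w /
      (probXt t (Xpair t w) (Ypast t w) * probYpast t.+1 w)) =
  ln (step_prob reduced_policy t w) + (ln (probYpast t w) - ln (probYpast t.+1 w)).
Proof.
move=> Pw; rewrite step_reduced //.
have A_gt0 : 0 < probXYt t (Xpair t w) (Ypast t w) (Ycur t w).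
  by apply: (prob_gt0 Pw); rewrite /= !eqxx.
have C_gt0 : 0 < probXt t (Xpair t w) (Ypast t w) by apply: (prob_gt0 Pw); rewrite /= !eqxx.
have Y_gt0 k : 0 < probYpast k w by apply: (prob_gt0 Pw) => /=.
rewrite !ln_div ?lnM ?posrE ?mulr_gt0 //; lra.
Qed.

Definition gap (t : 'I_n) :=
  \sum_w P w * (ln (step_prob q t w) - ln (step_prob reduced_policy t w)).

Lemma mi_sub_cmi :
  mi P (fun w : outcome W n => w.1) (fun w : outcome W n => w.2) -
  \sum_(t < n) cmi P (Xpair t) (Ycur t) (Ypast t) = \sum_t gap t.
Proof.
rewrite mi_jointE; under [X in _ - X]eq_bigr do rewrite cmi_XpairE.
rewrite exchange_big /= -sumrB /gap exchange_big /=; apply: eq_bigr => w _.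
rewrite -!big_distrr -mulrBr /=.
have [Pw|/joint_le0 ->] := ltP 0 (P w); last by rewrite !mul0r.
have telescope :
    \sum_(t < n) (ln (probYpast t w) - ln (probYpast t.+1 w)) = - ln (probYpast n w).
  rewrite -(big_mkord xpredT (fun t => ln (probYpast t w) - ln (probYpast t.+1 w))).
  rewrite -[LHS]opprK -sumrN; under eq_bigr do rewrite opprB.
  by rewrite telescope_sumr // probYpast0 ln1 subr0.
rewrite ln_mi_point //; under eq_bigr do rewrite ln_cmi_point //.
by rewrite big_split /= telescope sumrB; lra.
Qed.

Lemma step_reduced_gt0 (t : 'I_n) w : 0 < P w -> 0 < step_prob reduced_policy t w.
Proof. by move=> Pw; rewrite step_reduced // divr_gt0 // (prob_gt0 Pw) /= ?eqxx. Qed.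

Lemma sum_ratio_le1 (t : 'I_n) (r : policy R W) : is_policyH r ->
  \sum_w P w * (step_prob r t w / step_prob q t w) <= 1.
Proof.
move=> r_policy; rewrite (joint_step_cond t (fun xh yh y => r t xh yh y / q t xh yh y)).
rewrite -sum_joint; apply: ler_sum => w _; have [r_ge0 sum_r] := policy_distr_at t w r_policy.
rewrite -[leRHS]mulr1 -sum_r ler_wpM2l ?joint_ge0 //; apply: ler_sum => y _.
have [->|q_neq0] := eqVneq (q t (Xhist t w) (Ypast t w) y) 0; first by rewrite mul0r.
by rewrite mulrC divfK.
Qed.

Lemma gap_point_lb (t : 'I_n) w :
  P w - P w * (step_prob reduced_policy t w / step_prob q t w) <=
  P w * (ln (step_prob q t w) - ln (step_prob reduced_policy t w)).
Proof.
have [Pw|/joint_le0 ->] := ltP 0 (P w); last by rewrite !mul0r subrr.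
rewrite -[X in X - _]mulr1 -mulrBr ler_pM2l //.
exact: ln_ratio_ge (step_gt0 t Pw) (step_reduced_gt0 t Pw).
Qed.

Lemma gap_ge0 t : 0 <= gap t.
Proof.
have := sum_ratio_le1 t reduced_policyS.1; rewrite -subr_ge0 => /le_trans; apply.
by rewrite -{1}sum_joint -sumrB; apply: ler_sum => w _; apply: gap_point_lb.
Qed.

Lemma gap_eq0_step t : gap t = 0 ->
  forall w, 0 < P w -> step_prob reduced_policy t w = step_prob q t w.
Proof.
move=> gap0 w Pw.
(* gap t splits into the nonnegative slacks below plus 1 - sum_v P v r/q >= 0. *)
pose slack v := P v * (ln (step_prob q t v) - ln (step_prob reduced_policy t v)) -
  (P v - P v * (step_prob reduced_policy t v / step_prob q t v)).
have slack_ge0 v : true -> 0 <= slack v by move=> _; rewrite subr_ge0 gap_point_lb.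
have slack_sum0 : \sum_v slack v = 0.
  apply/le_anti; rewrite sumr_ge0 // andbT sumrB.
  move: gap0; rewrite /gap => ->; rewrite sumrB sum_joint sub0r oppr_le0 subr_ge0.
  exact: sum_ratio_le1 reduced_policyS.1.
have /eqP := psumr_eq0P slack_ge0 slack_sum0 (i := w) isT.
rewrite subr_eq0 -[X in _ == X - _]mulr1 -mulrBr => /eqP /(mulfI (lt0r_neq0 Pw)).
exact: ln_ratio_eq (step_gt0 t Pw) (step_reduced_gt0 t Pw).
Qed.

Definition support_agree (r : policy R W) := forall w, 0 < P w ->
  forall t : 'I_n, q t (Xhist t w) (Ypast t w) =1 r t (Xhist t w) (Ypast t w).

Lemma gap_eq0_agree : (forall t, gap t = 0) -> support_agree reduced_policy.
Proof.
move=> gap0 w Pw t; have [q_ge0 sum_q] := policy_distr_at t w q_policy.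
have [r_ge0 sum_r] := policy_distr_at t w reduced_policyS.1.
apply: eqfun_of_support => // [|y qy]; first by rewrite sum_q sum_r.
have qy_gt0 : 0 < q t (Xhist t w) (Ypast t w) y by rewrite lt_def qy q_ge0.
have [v [Pv <- <- <-]] := joint_support_step Pw qy_gt0.
exact/esym/(gap_eq0_step (gap0 t) Pv).
Qed.

Lemma probXYt_factor r : is_policyS r -> support_agree r -> forall t w, 0 < P w ->
  probXYt t (Xpair t w) (Ypast t w) (Ycur t w) =
  step_prob q t w * probXt t (Xpair t w) (Ypast t w).
Proof.
move=> [_ r_local] q_eq_r t w Pw.
pose E xh yh := (key_of_seq (drop t.-1 xh) == Some (Xpair t w)) && (yh == Ypast t w).
have E_Xpair v :
    E (Xhist t v) (Ypast t v) = (Xpair t v == Xpair t w) && (Ypast t v == Ypast t w).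
  by rewrite /E drop_Xhist key_seqK.
have -> : probXYt t (Xpair t w) (Ypast t w) (Ycur t w) =
          prob P [pred v | E (Xhist t v) (Ypast t v) && (Ycur t v == Ycur t w)].
  by apply: eq_bigl => v; rewrite /= E_Xpair -andbA (andbC (Ypast t v == _)).
rewrite prob_Ycur_event /probXt prob_indicator big_distrr /=; apply: eq_bigr => v _.
rewrite E_Xpair; have [Pv|/joint_le0 ->] := ltP 0 (P v); last by rewrite !(mul0r, mulr0).
case: andP => [[/eqP Xv /eqP Yv]|_]; last by rewrite !(mul0r, mulr0).
rewrite mulr1 mulrC; congr (_ * _).
rewrite /step_prob (q_eq_r v Pv) (q_eq_r w Pw) Yv.
by apply: r_local; rewrite ?size_Xhist // !drop_Xhist Xv.
Qed.

Lemma gap_eq0_of_policyS r : is_policyS r -> support_agree r -> forall t, gap t = 0.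
Proof.
move=> r_policyS q_eq_r t; apply: big1 => w _.
have [Pw|/joint_le0 ->] := ltP 0 (P w); last by rewrite mul0r.
have C_gt0 : 0 < probXt t (Xpair t w) (Ypast t w) by apply: (prob_gt0 Pw); rewrite /= !eqxx.
by rewrite step_reduced // (probXYt_factor r_policyS) // mulfK ?lt0r_neq0 // subrr mulr0.
Qed.

End Policy.
End ReleaseModel.

Theorem lemma1 (R : realType) (W : finType) (p1 : W -> R) (K : W -> W -> R)
    (q : policy R W) (n : nat) :
  (forall x, 0 <= p1 x) -> \sum_(x : W) p1 x = 1 ->
  (forall x x', 0 <= K x x') -> (forall x, \sum_(x' : W) K x x' = 1) ->
  is_policyH q -> (0 < n)%N ->
  let P := @joint R W n p1 K q in
  let lhs := mi P (fun w : outcome W n => w.1) (fun w : outcome W n => w.2) in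
  let rhs := \sum_(t < n) cmi P (Xpair t) (Ycur t) (Ypast t) in
  rhs <= lhs /\
  (lhs = rhs <->
   exists r : policy R W, is_policyS r /\
     forall w : outcome W n, 0 < P w -> forall t : 'I_n,
       q t (take t.+1 w.1) (take t w.2) =1 r t (take t.+1 w.1) (take t w.2)).
Proof.
move=> p1_ge0 sum_p1 K_ge0 sum_K q_policy _ P lhs rhs.
have gapE : lhs - rhs = \sum_(t < n) gap p1 K q t :=
  mi_sub_cmi n p1_ge0 sum_p1 K_ge0 sum_K q_policy.
have gap_ge0' (t : 'I_n) : true -> 0 <= gap p1 K q t by move=> _; exact: gap_ge0.
split; first by rewrite -subr_ge0 gapE; apply: sumr_ge0.
split=> [lhs_eq_rhs | [r [r_policyS q_eq_r]]].
- have sum_gap0 : \sum_(t < n) gap p1 K q t = 0 by rewrite -gapE lhs_eq_rhs subrr.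
  have gap0 (t : 'I_n) : gap p1 K q t = 0 := psumr_eq0P gap_ge0' sum_gap0 (i := t) isT.
  exists (reduced_policy p1 K n q); split; first exact: reduced_policyS.
  exact: gap_eq0_agree gap0.
- apply/eqP; rewrite -subr_eq0 gapE big1 // => t _.
  exact: gap_eq0_of_policyS r_policyS q_eq_r t.
Qed.
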